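(* For all $a,b\in\mathbb{B}^n$, \[ \mathrm{th}\left(\frac{\rho_{\mathbb{B}^n}(a,b)}{4}\right)\ge\mathrm{th}\left(\frac{h_{\mathbb{B}^n}(a,b)}{4}\right)\ge\frac{|a-b|}{\sqrt{4-|a+b|^2}}, \] with equality if $a=-b$.
   Context: $\mathbb{B}^n$ is the unit ball of $\mathbb{R}^n$. Hyperbolic metric: $\mathrm{sh}\frac{\rho_{\mathbb{B}^n}(a,b)}{2}=\frac{|a-b|}{\sqrt{(1-|a|^2)(1-|b|^2)}}$. Hilbert metric: for distinct $a,b$ in a bounded convex domain $G\subset\mathbb{R}^n$, let $u,v$ be the intersection points of the line through $a,b$ with $\partial G$, ordered $u,a,b,v$; $h_G(a,b)=\log\frac{|u-b||a-v|}{|u-a||b-v|}$, and $h_G(a,a)=0$. *)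

From HB Require Import structures.
From mathcomp Require Import all_boot all_order all_algebra.
From mathcomp Require Import all_classical all_reals all_analysis.
Set Implicit Arguments. Unset Strict Implicit. Unset Printing Implicit Defensive.
Import Order.TTheory GRing.Theory Num.Theory.
Local Open Scope classical_set_scope.
Local Open Scope ring_scope.

Section Defs.
Variable R : realType.
Variable n : nat.

Definition enorm (x : 'rV[R]_n) : R := Num.sqrt (\sum_(i < n) x 0 i ^+ 2).

Definition unit_ball : set 'rV[R]_n := [set x | enorm x < 1].

Definition sinh (x : R) : R := (expR x - expR (- x)) / 2.
Definition tanh (x : R) : R := (expR x - expR (- x)) / (expR x + expR (- x)).
Definition arsinh (y : R) : R := ln (y + Num.sqrt (y ^+ 2 + 1)).

(* hyperbolic metric of B^n: the nonnegative rho with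
   sh (rho/2) = |a-b| / sqrt((1-|a|^2)(1-|b|^2)), i.e. rho = 2 arsinh(...) *)
Definition rho_ball (a b : 'rV[R]_n) : R :=
  2 * arsinh (enorm (a - b) / Num.sqrt ((1 - enorm a ^+ 2) * (1 - enorm b ^+ 2))).

(* the point where the ray from p through q leaves the (bounded convex) domain G:
   p + t* (q - p) with t* = sup {t >= 0 | p + t (q - p) \in G}; it lies on the
   boundary of G, beyond q *)
Definition ray_exit (G : set 'rV[R]_n) (p q : 'rV[R]_n) : 'rV[R]_n :=
  p + (sup [set t : R | 0 <= t /\ G (p + t *: (q - p))]) *: (q - p).

(* Hilbert metric of a bounded convex domain G: with u, v the intersection
   points of the line through a, b with the boundary of G, ordered u, a, b, v *)
Definition hilbert (G : set 'rV[R]_n) (a b : 'rV[R]_n) : R :=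
  if a == b then 0 else
  let u := ray_exit G b a in
  let v := ray_exit G a b in
  ln (enorm (u - b) * enorm (a - v) / (enorm (u - a) * enorm (b - v))).

End Defs.

(* Let u and v be the endpoints of the chord of the unit ball through a and b, in
   the order u, a, b, v, and write u = a - s (b - a), v = b + t (b - a), d = |a - b|.
   The power of a point with respect to the unit sphere gives
   1 - |a|^2 = d^2 s (1 + t), 1 - |b|^2 = d^2 (1 + s) t and
   4 - |a + b|^2 = d^2 (1 + 2s) (1 + 2t), while h = ln ((1 + s) (1 + t) / (s t)).
   Hence sinh (h/2) = (|u - v| / 2) sinh (rho/2), and the first inequality is
   |u - v| <= 2.  Through tanh (2x) = 2 tanh x / (1 + tanh^2 x) the second one reduces
   to the AM-GM inequality sqrt ((1 + 2s) (1 + 2t)) <= 1 + s + t.  For a = -b the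
   chord is a diameter and s = t, so both become equalities. *)

From HB Require Import structures.
From mathcomp Require Import all_boot all_order all_algebra.
From mathcomp Require Import all_classical all_reals all_analysis.
From mathcomp Require Import ring lra.
Import Order.TTheory GRing.Theory Num.Theory.
Set Implicit Arguments.
Unset Strict Implicit.
Local Open Scope classical_set_scope.
Local Open Scope ring_scope.

Section Hyperbolic.
Variable R : realType.
Implicit Types x y r s t X : R.

Lemma ler_sinh : {mono @sinh R : x y / x <= y}.
Proof.
apply: le_mono => x y xy; rewrite /sinh ltr_pM2r // ltrB ?ltr_expR ?ltrN2 //.
Qed.

Lemma sinh0 : sinh 0 = 0 :> R.
Proof. by rewrite /sinh oppr0 subrr mul0r. Qed.

Lemma sinh_arsinh y : sinh (arsinh y) = y.
Proof.
rewrite /sinh /arsinh expRN; set s : R := Num.sqrt _.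
have s2 : s ^+ 2 = y ^+ 2 + 1 by rewrite sqr_sqrtr // addr_ge0 ?sqr_ge0.
have ys_gt0 : 0 < y + s.
  have : `|y| < s by rewrite -sqrtr_sqr ltr_sqrt ?ltrDl // ltr_wpDl ?sqr_ge0.
  by rewrite ltr_norml => /andP[? ?]; lra.
have inv : (y + s)^-1 = s - y.
  apply: (mulfI (lt0r_neq0 ys_gt0)).
  rewrite mulfV ?gt_eqF // (_ : (y + s) * (s - y) = s ^+ 2 - y ^+ 2); last by ring.
  by rewrite s2; ring.
by rewrite (lnK (ys_gt0 : y + s \in Num.pos)) inv; field.
Qed.

Lemma sinh_half_ln_sqr X : 0 < X -> sinh (ln X / 2) ^+ 2 = (X - 1) ^+ 2 / (4 * X).
Proof.
move=> X_gt0; rewrite /sinh expRN; set K := expR _.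
have K_gt0 : 0 < K by exact: expR_gt0.
have KX : K ^+ 2 = X by rewrite expr2 -expRD -splitr lnK.
rewrite -KX; field; lra.
Qed.

Lemma tanhE x : tanh x = (expR (2 * x) - 1) / (expR (2 * x) + 1).
Proof.
have e : 0 < expR x by exact: expR_gt0.
rewrite /tanh expRN (_ : 2 * x = x + x) ?expRD; last by ring.
field; nra.
Qed.

Lemma tanh_half_ln X : 0 < X -> tanh (ln X / 2) = (X - 1) / (X + 1).
Proof. by move=> X_gt0; rewrite tanhE [2 * _]mulrC divfK // (lnK (X_gt0 : X \in Num.pos)). Qed.

Lemma ler_ratio_m1p1 s t : 0 < s -> 0 < t ->
  ((s - 1) / (s + 1) <= (t - 1) / (t + 1)) = (s <= t).
Proof.
move=> s_gt0 t_gt0; rewrite -subr_ge0 -[(s <= t)]subr_ge0.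
have -> : (t - 1) / (t + 1) - (s - 1) / (s + 1) = (t - s) * (2 / ((t + 1) * (s + 1))).
  by field; lra.
by rewrite pmulr_lge0 // divr_gt0 // mulr_gt0 //; lra.
Qed.

Lemma ler_tanh : {mono @tanh R : x y / x <= y}.
Proof. by move=> x y; rewrite !tanhE ler_ratio_m1p1 ?expR_gt0 // ler_expR ler_pM2l. Qed.

Lemma tanh_itv x : -1 < tanh x < 1.
Proof.
have e : 0 < expR (2 * x) by exact: expR_gt0.
by rewrite tanhE ltr_pdivlMr ?ltr_pdivrMr; lra.
Qed.

Lemma tanh_double x : tanh (2 * x) = 2 * tanh x / (1 + tanh x ^+ 2).
Proof.
rewrite !tanhE (_ : 2 * (2 * x) = 2 * x + 2 * x) ?expRD; last by ring.
have e : 0 < expR (2 * x) by exact: expR_gt0.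
field; nra.
Qed.

Lemma ler_double_ratio r s : -1 < r < 1 -> -1 < s < 1 ->
  (2 * r / (1 + r ^+ 2) <= 2 * s / (1 + s ^+ 2)) = (r <= s).
Proof.
move=> /andP[r_gtN1 r_lt1] /andP[s_gtN1 s_lt1].
rewrite -subr_ge0 -[(r <= s)]subr_ge0.
have -> : 2 * s / (1 + s ^+ 2) - 2 * r / (1 + r ^+ 2)
    = (s - r) * (2 * (1 - r * s) / ((1 + s ^+ 2) * (1 + r ^+ 2))).
  by field; nra.
by rewrite pmulr_lge0 // divr_gt0 // ?mulr_gt0; nra.
Qed.

End Hyperbolic.

Section Euclidean.
Variables (R : realType) (n : nat).
Implicit Types (x p q d : 'rV[R]_n) (s t y z : R).

Definition dot x x' : R := \sum_(i < n) x 0 i * x' 0 i.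

Lemma sqr_enorm x : enorm x ^+ 2 = dot x x.
Proof.
rewrite sqr_sqrtr; last by apply: sumr_ge0 => i _; exact: sqr_ge0.
by apply: eq_bigr => i _; rewrite expr2.
Qed.

Lemma enorm_ge0 x : 0 <= enorm x.
Proof. exact: sqrtr_ge0. Qed.

Lemma enorm0 : enorm (0 : 'rV[R]_n) = 0.
Proof. by rewrite /enorm big1 ?sqrtr0 // => i _; rewrite mxE expr0n. Qed.

Lemma enormZ t x : enorm (t *: x) = `|t| * enorm x.
Proof.
rewrite /enorm -sqrtr_sqr -sqrtrM ?sqr_ge0 // mulr_sumr.
by congr Num.sqrt; apply: eq_bigr => i _; rewrite mxE exprMn.
Qed.

Lemma enormN x : enorm (- x) = enorm x.
Proof. by rewrite -scaleN1r enormZ normrN1 mul1r. Qed.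

Lemma enorm_gt0 x : x != 0 -> 0 < enorm x.
Proof.
move=> x_neq0; rewrite lt_neqAle enorm_ge0 andbT eq_sym; apply: contra x_neq0.
rewrite -sqrf_eq0 sqr_enorm => /eqP /psumr_eq0P x2_eq0.
apply/eqP/rowP => i; rewrite mxE; apply/eqP; rewrite -sqrf_eq0 expr2 x2_eq0 // => j _.
by rewrite -expr2 sqr_ge0.
Qed.

Lemma unit_ball_sqr x : unit_ball x <-> enorm x ^+ 2 < 1.
Proof. by rewrite /unit_ball /= expr_lt1 // enorm_ge0. Qed.

Lemma sqr_enorm_line p d t :
  enorm (p + t *: d) ^+ 2 = enorm p ^+ 2 + 2 * t * dot p d + t ^+ 2 * enorm d ^+ 2.
Proof.
rewrite !sqr_enorm /dot !mulr_sumr -!big_split /=.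
by apply: eq_bigr => i _; rewrite !mxE; ring.
Qed.

Lemma power_of_point p d y z t : y != z ->
  enorm (p + y *: d) = 1 -> enorm (p + z *: d) = 1 ->
  1 - enorm (p + t *: d) ^+ 2 = enorm d ^+ 2 * (t - y) * (z - t).
Proof.
move=> yz /(congr1 (fun r => r ^+ 2)) hy /(congr1 (fun r => r ^+ 2)) hz.
rewrite expr1n !sqr_enorm_line in hy hz *.
set A := enorm p ^+ 2 in hy hz *; set B := dot p d in hy hz *.
set C := enorm d ^+ 2 in hy hz *.
have hB : 2 * B = - (y + z) * C.
  have : (y - z) * (2 * B + (y + z) * C)
      = (A + 2 * y * B + y ^+ 2 * C) - (A + 2 * z * B + z ^+ 2 * C) by ring.
  rewrite hy hz subrr.
  by move/eqP; rewrite mulf_eq0 subr_eq0 (negbTE yz) addr_eq0 => /eqP ->; ring.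
have -> : 1 - (A + 2 * t * B + t ^+ 2 * C)
    = (1 - (A + 2 * y * B + y ^+ 2 * C)) + (y - t) * (2 * B) + (y ^+ 2 - t ^+ 2) * C.
  by ring.
by rewrite hy subrr add0r hB; ring.
Qed.

Lemma ray_exit_unit_ball p q : unit_ball p -> unit_ball q -> p != q ->
  exists2 s, 1 < s &
    ray_exit (@unit_ball R n) p q = p + s *: (q - p) /\ enorm (p + s *: (q - p)) = 1.
Proof.
move=> /unit_ball_sqr p_in q_in pq; set d := q - p.
set C := enorm d ^+ 2; set B := dot p d; set A := 1 - enorm p ^+ 2.
have C_gt0 : 0 < C by rewrite exprn_gt0 // enorm_gt0 // subr_eq0 eq_sym.
have A_gt0 : 0 < A by rewrite subr_gt0.
set D : R := Num.sqrt (B ^+ 2 + C * A).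
have D_ge0 : 0 <= D by exact: sqrtr_ge0.
have D2 : D ^+ 2 = B ^+ 2 + C * A.
  by rewrite sqr_sqrtr // addr_ge0 ?sqr_ge0 // mulr_ge0 // ltW.
have : `|B| < D.
  by rewrite -ltr_sqr ?nnegrE // real_normK ?num_real // D2 ltrDl mulr_gt0.
rewrite ltr_norml => /andP[NBD BD].
(* [s' < 0 < s] are the roots of [t |-> 1 - |p + t d|^2]. *)
set s := (D - B) / C; set s' := (- D - B) / C.
have factor t : 1 - enorm (p + t *: d) ^+ 2 = C * (s - t) * (t - s').
  rewrite sqr_enorm_line -/B -/C (_ : C * _ * _ = (D ^+ 2 - (B + C * t) ^+ 2) / C).
    by rewrite D2 /A; field; lra.
  by rewrite /s /s'; field; lra.
have s_gt0 : 0 < s by rewrite divr_gt0 // subr_gt0.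
have s'_lt0 : s' < 0 by rewrite /s' ltr_pdivrMr // mul0r; lra.
have in_ball t : 0 <= t -> unit_ball (p + t *: d) <-> t < s.
  move=> t_ge0; rewrite unit_ball_sqr -subr_gt0 factor -mulrA pmulr_rgt0 //.
  by rewrite pmulr_lgt0 ?subr_gt0 //; lra.
exists s.
  by apply/(in_ball 1 ler01); rewrite scale1r subrKC.
split.
  rewrite /ray_exit; congr (p + _ *: _).
  have -> : [set t | 0 <= t /\ unit_ball (p + t *: d)] = [set` `[0, s[].
    apply/seteqP; split => t /=; rewrite in_itv /=.
      by move=> [t_ge0 /(in_ball t t_ge0) ->]; rewrite t_ge0.
    by move=> /andP[t_ge0 ts]; split => //; apply/(in_ball t t_ge0).
  by rewrite sup_itv // bnd_simp.
have := factor s; rewrite subrr mulr0 mul0r => /eqP.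
by rewrite subr_eq0 eq_sym sqrp_eq1 ?enorm_ge0 // => /eqP.
Qed.

Lemma unit_ball_chord a b : unit_ball a -> unit_ball b -> a != b ->
  exists s t, [/\ 0 < s, 0 < t, enorm (a + (- s) *: (b - a)) = 1,
    enorm (a + (1 + t) *: (b - a)) = 1 &
    hilbert (@unit_ball R n) a b = ln ((1 + s) * (1 + t) / (s * t))].
Proof.
move=> a_in b_in ab.
have ba : b != a by rewrite eq_sym.
have [s1 s1_gt1 [u_def u_unit]] := ray_exit_unit_ball b_in a_in ba.
have [s2 s2_gt1 [v_def v_unit]] := ray_exit_unit_ball a_in b_in ab.
exists (s1 - 1), (s2 - 1); split; rewrite ?subr_gt0 //.
- by rewrite -[RHS]u_unit; congr enorm; apply/rowP => i; rewrite !mxE; ring.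
- by rewrite subrKC.
have d_gt0 : 0 < enorm (a - b) by rewrite enorm_gt0 // subr_eq0.
rewrite /hilbert (negbTE ab) /= u_def v_def.
have -> : b + s1 *: (a - b) - b = s1 *: (a - b) by apply/rowP => i; rewrite !mxE; ring.
have -> : a - (a + s2 *: (b - a)) = s2 *: (a - b) by apply/rowP => i; rewrite !mxE; ring.
have -> : b + s1 *: (a - b) - a = (s1 - 1) *: (a - b) by apply/rowP => i; rewrite !mxE; ring.
have -> : b - (a + s2 *: (b - a)) = (s2 - 1) *: (a - b) by apply/rowP => i; rewrite !mxE; ring.
rewrite !enormZ !gtr0_norm ?subr_gt0 //; try lra.
by congr ln; field; rewrite !gt_eqF // ?subr_gt0 //; lra.
Qed.

End Euclidean.

Section ChordGeometry.
Variables (R : realType) (n : nat) (a b : 'rV[R]_n) (s t : R).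
Hypotheses (s_gt0 : 0 < s) (t_gt0 : 0 < t).
Hypothesis u_unit : enorm (a + (- s) *: (b - a)) = 1.
Hypothesis v_unit : enorm (a + (1 + t) *: (b - a)) = 1.
Local Notation d := (enorm (a - b)).

Lemma chord_power x : 1 - enorm (a + x *: (b - a)) ^+ 2 = d ^+ 2 * (x + s) * (1 + t - x).
Proof.
have st : - s < 1 + t by move: s_gt0 t_gt0; lra.
by rewrite (power_of_point x (negbT (lt_eqF st)) u_unit v_unit) -opprB enormN opprK.
Qed.

Lemma one_sub_sqr_enorm_l : 1 - enorm a ^+ 2 = d ^+ 2 * s * (1 + t).
Proof. by have := chord_power 0; rewrite scale0r addr0 add0r subr0. Qed.

Lemma one_sub_sqr_enorm_r : 1 - enorm b ^+ 2 = d ^+ 2 * (1 + s) * t.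
Proof. by have := chord_power 1; rewrite scale1r subrKC => ->; ring. Qed.

Lemma four_sub_sqr_enorm_add : 4 - enorm (a + b) ^+ 2 = d ^+ 2 * (1 + 2 * s) * (1 + 2 * t).
Proof.
have -> : a + b = 2 *: (a + 2^-1 *: (b - a)) by apply/rowP => i; rewrite !mxE; field.
rewrite enormZ ger0_norm // exprMn.
have -> : 4 - 2 ^+ 2 * enorm (a + 2^-1 *: (b - a)) ^+ 2
    = 4 * (1 - enorm (a + 2^-1 *: (b - a)) ^+ 2) by ring.
by rewrite chord_power; field.
Qed.

Lemma chord_length_le2 : (1 + s + t) * d <= 2.
Proof.
(* The power of the midpoint of the chord is (chord length / 2)^2 <= 1. *)
have : ((1 + s + t) * d) ^+ 2 <= 2 ^+ 2.
  have := chord_power ((1 + t - s) / 2).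
  have := sqr_ge0 (enorm (a + ((1 + t - s) / 2) *: (b - a))).
  have -> : ((1 + s + t) * d) ^+ 2
      = 4 * (d ^+ 2 * ((1 + t - s) / 2 + s) * (1 + t - (1 + t - s) / 2)) by field.
  lra.
have c_ge0 : 0 <= (1 + s + t) * d by rewrite mulr_ge0 ?enorm_ge0 //; move: s_gt0 t_gt0; lra.
by rewrite ler_sqr ?nnegrE.
Qed.

Lemma antipodal_chord : a != b -> a = - b -> s = t /\ (1 + s + t) * d = 2.
Proof.
move=> ab ab_opp.
have d_gt0 : 0 < d by rewrite enorm_gt0 // subr_eq0.
have st : s = t.
  have norm_ab : enorm a = enorm b by rewrite ab_opp enormN.
  have := one_sub_sqr_enorm_l; rewrite norm_ab one_sub_sqr_enorm_r -!mulrA.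
  by move=> /(mulfI (lt0r_neq0 d_gt0)) /(mulfI (lt0r_neq0 d_gt0)); lra.
split=> //.
have ab0 : a + b = 0 by rewrite ab_opp addNr.
have := four_sub_sqr_enorm_add; rewrite ab0 enorm0 expr0n subr0 -st => diam.
apply: (pexpIrn (isT : (0 < 2)%N)); rewrite ?nnegrE /=.
- by rewrite mulr_ge0 ?enorm_ge0 //; move: s_gt0; lra.
- by [].
have -> : 2 ^+ 2 = 4 :> R by ring.
by rewrite diam; ring.
Qed.

End ChordGeometry.

Section ChordHyperbolic.
Variables (R : realType) (s t d : R).
(* [X] is the cross ratio defining [hilbert], [w] is sinh (rho/2) and [r] is the
   lower bound of the theorem, all in the chord coordinates of the header. *)
Local Notation X := ((1 + s) * (1 + t) / (s * t)).
Local Notation w := (d / Num.sqrt (d ^+ 2 * s * (1 + t) * (d ^+ 2 * (1 + s) * t))).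
Local Notation r := (d / Num.sqrt (d ^+ 2 * (1 + 2 * s) * (1 + 2 * t))).

Lemma sinh_half_ln_chord : 0 < s -> 0 < t -> 0 < d ->
  sinh (ln X / 2) = (1 + s + t) * d / 2 * w.
Proof.
move=> s_gt0 t_gt0 d_gt0.
have X_ge1 : 1 <= X by rewrite ler_pdivlMr ?mulr_gt0 // mul1r; nra.
apply: (pexpIrn (isT : (0 < 2)%N)); rewrite ?nnegrE /=.
- by rewrite -[X in X <= _](sinh0 R) ler_sinh divr_ge0 // ln_ge0.
- by rewrite !mulr_ge0 ?divr_ge0 ?sqrtr_ge0 ?(ltW d_gt0) //; lra.
rewrite sinh_half_ln_sqr; last lra.
rewrite exprMn [w ^+ 2]expr_div_n sqr_sqrtr; last by rewrite !mulr_ge0 //; lra.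
by field; rewrite !gt_eqF //; lra.
Qed.

Lemma tanh_hilbert_le_rho_chord : 0 < s -> 0 < t -> 0 < d -> (1 + s + t) * d <= 2 ->
  tanh (ln X / 4) <= tanh (2 * arsinh w / 4).
Proof.
move=> s_gt0 t_gt0 d_gt0 chord_le2.
have : ln X / 2 <= arsinh w.
  rewrite -ler_sinh sinh_arsinh sinh_half_ln_chord // ler_piMl ?divr_ge0 ?sqrtr_ge0 //; [lra|].
  by rewrite ler_pdivrMr // mul1r.
by rewrite ler_tanh; lra.
Qed.

Lemma hilbert_eq_rho_chord : 0 < s -> 0 < t -> 0 < d -> (1 + s + t) * d = 2 ->
  ln X = 2 * arsinh w.
Proof.
move=> s_gt0 t_gt0 d_gt0 chord_eq2.
have : ln X / 2 = arsinh w.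
  apply: (inc_inj (@ler_sinh R)).
  by rewrite sinh_arsinh sinh_half_ln_chord // chord_eq2 divff ?mul1r.
by move=> <-; field.
Qed.

Local Notation Q := ((1 + 2 * s) * (1 + 2 * t)).

Lemma chord_ratioE : 0 < d -> r = (Num.sqrt Q)^-1.
Proof.
move=> d_gt0; rewrite -mulrA sqrtrM ?sqr_ge0 // sqrtr_sqr gtr0_norm //.
by rewrite invfM mulVKf // gt_eqF.
Qed.

Lemma chord_ratio_itv : 0 < s -> 0 < t -> 0 < d -> -1 < r < 1.
Proof.
move=> s_gt0 t_gt0 d_gt0; rewrite chord_ratioE //.
have Q_gt1 : 1 < Num.sqrt Q by rewrite -[X in X < _]sqrtr1 ltr_sqrt; nra.
rewrite invf_lt1 ?Q_gt1 ?andbT; last lra.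
by rewrite (@lt_le_trans _ _ 0) ?invr_ge0 ?sqrtr_ge0.
Qed.

Lemma tanh_half_ln_chord : 0 < s -> 0 < t ->
  tanh (ln X / 2) = (1 + s + t) / (1 + s + t + 2 * s * t).
Proof.
move=> s_gt0 t_gt0; rewrite tanh_half_ln; last by rewrite divr_gt0 ?mulr_gt0 //; lra.
by field; rewrite !gt_eqF //; nra.
Qed.

Lemma double_tanh_quarter_ln_chord : 0 < s -> 0 < t ->
  2 * tanh (ln X / 4) / (1 + tanh (ln X / 4) ^+ 2) = (1 + s + t) / (1 + s + t + 2 * s * t).
Proof.
move=> s_gt0 t_gt0; rewrite -tanh_double -tanh_half_ln_chord //.
by congr tanh; field.
Qed.

Lemma double_ratio_chord : 0 < s -> 0 < t -> 0 < d ->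
  2 * r / (1 + r ^+ 2) = Num.sqrt Q / (1 + s + t + 2 * s * t).
Proof.
move=> s_gt0 t_gt0 d_gt0; rewrite chord_ratioE //.
have S_gt0 : 0 < Num.sqrt Q by rewrite sqrtr_gt0; nra.
have -> : 1 + s + t + 2 * s * t = (Num.sqrt Q ^+ 2 + 1) / 2.
  by rewrite sqr_sqrtr; [field | nra].
by field; rewrite gt_eqF //; nra.
Qed.

Lemma ratio_le_tanh_hilbert_chord : 0 < s -> 0 < t -> 0 < d -> r <= tanh (ln X / 4).
Proof.
move=> s_gt0 t_gt0 d_gt0.
rewrite -(ler_double_ratio (chord_ratio_itv _ _ _) (tanh_itv _)) //.
rewrite double_ratio_chord // double_tanh_quarter_ln_chord // ler_pM2r ?invr_gt0; last nra.
rewrite -(ger0_norm (_ : 0 <= 1 + s + t)); last lra.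
rewrite -sqrtr_sqr ler_sqrt ?sqr_ge0 // -subr_ge0.
by rewrite (_ : _ - _ = (s - t) ^+ 2) ?sqr_ge0 //; ring.
Qed.

Lemma ratio_eq_tanh_hilbert_chord : 0 < s -> 0 < t -> 0 < d -> s = t ->
  r = tanh (ln X / 4).
Proof.
move=> s_gt0 t_gt0 d_gt0 st; apply/le_anti; rewrite ratio_le_tanh_hilbert_chord //=.
rewrite -(ler_double_ratio (tanh_itv _) (chord_ratio_itv _ _ _)) //.
rewrite double_ratio_chord // double_tanh_quarter_ln_chord // ler_pM2r ?invr_gt0; last nra.
rewrite -st (_ : (1 + 2 * s) * (1 + 2 * s) = (1 + s + s) ^+ 2); last by ring.
by rewrite sqrtr_sqr ger0_norm //; lra.
Qed.

End ChordHyperbolic.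

Theorem corollary3p10 (R : realType) (n : nat) (a b : 'rV[R]_n) :
  unit_ball a -> unit_ball b ->
  [/\ tanh (rho_ball a b / 4) >= tanh (hilbert (@unit_ball R n) a b / 4),
      tanh (hilbert (@unit_ball R n) a b / 4)
        >= enorm (a - b) / Num.sqrt (4 - enorm (a + b) ^+ 2)
    & a = - b ->
      tanh (rho_ball a b / 4) = tanh (hilbert (@unit_ball R n) a b / 4) /\
      tanh (hilbert (@unit_ball R n) a b / 4)
        = enorm (a - b) / Num.sqrt (4 - enorm (a + b) ^+ 2)].
Proof.
move=> a_in b_in.
have [<-|ab] := eqVneq a b.
  rewrite /hilbert eqxx /rho_ball subrr enorm0 !mul0r /arsinh expr2 mul0r !add0r sqrtr1 ln1.
  by rewrite mulr0 mul0r /tanh oppr0 subrr mul0r.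
have [s [t [s_gt0 t_gt0 u_unit v_unit ->]]] := unit_ball_chord a_in b_in ab.
have d_gt0 : 0 < enorm (a - b) by rewrite enorm_gt0 // subr_eq0.
rewrite /rho_ball (one_sub_sqr_enorm_l s_gt0 t_gt0 u_unit v_unit).
rewrite (one_sub_sqr_enorm_r s_gt0 t_gt0 u_unit v_unit).
rewrite (four_sub_sqr_enorm_add s_gt0 t_gt0 u_unit v_unit).
split.
- exact: tanh_hilbert_le_rho_chord (chord_length_le2 s_gt0 t_gt0 u_unit v_unit).
- exact: ratio_le_tanh_hilbert_chord.
move=> /(antipodal_chord s_gt0 t_gt0 u_unit v_unit ab) [st chord_eq2]; split.
  by rewrite -hilbert_eq_rho_chord.
by rewrite (ratio_eq_tanh_hilbert_chord s_gt0 t_gt0 d_gt0 st).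
Qed.
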